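(* Let $a,b,c,\gamma\in\mathbb{R}$ with $b\gamma\neq 0$, and let $\Omega\subset\mathbb{R}$ be a compact interval containing $0$ in its interior. Then the control system on $\mathbb{R}^2$ $$\dot s=\omega b,\qquad \dot t=(\gamma+a\omega)s+c\omega,\qquad \omega\in\Omega,$$ is controllable, i.e. for every $\mathbf v\in\mathbb{R}^2$ the positive orbit $\mathcal O^+(\mathbf v)=\{\varphi(\tau,\mathbf v,\omega):\tau\geq 0,\ \omega\in\mathcal U\}$ equals $\mathbb{R}^2$.
   Context: $\mathcal U$ denotes the set of piecewise constant functions $\omega:\mathbb{R}\to\Omega$ (controls), and $\varphi(\tau,\mathbf v,\omega)$ denotes the solution of the system at time $\tau$ with initial state $\mathbf v$ and control $\omega$. *)

From Stdlib Require Import Reals List.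
From Coquelicot Require Import Coquelicot.
Open Scope R_scope.

Definition loc_const (w : R -> R) (u : R) : Prop :=
  exists d : R, 0 < d /\ forall y : R, Rabs (y - u) < d -> w y = w u.

Definition piecewise_constant (w : R -> R) : Prop :=
  forall al be : R, exists l : list R,
    forall u : R, al < u < be -> ~ In u l -> loc_const w u.

Definition admissible (lo hi : R) (w : R -> R) : Prop :=
  piecewise_constant w /\ forall u : R, lo <= w u <= hi.

(* (s, t) : R -> R^2 is the (Caratheodory) solution of
     s' = w b,  t' = (gamma + a w) s + c w
   with initial state v at time 0: continuous everywhere, and satisfying the
   ODE at every time where the control is locally constant (i.e. outside the
   switching times, which are finite on bounded intervals). *)
Definition is_solution (a b c gamma : R) (w : R -> R) (v : R * R)
  (s t : R -> R) : Prop :=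
  s 0 = fst v /\ t 0 = snd v /\
  (forall u : R, continuous s u /\ continuous t u) /\
  (forall u : R, loc_const w u ->
     is_derive s u (w u * b) /\
     is_derive t u ((gamma + a * w u) * s u + c * w u)).

Definition pos_orbit (a b c gamma lo hi : R) (v : R * R) : R * R -> Prop :=
  fun z => exists (tau : R) (w : R -> R) (s t : R -> R),
    0 <= tau /\ admissible lo hi w /\ is_solution a b c gamma w v s t /\
    z = (s tau, t tau).

From Stdlib Require Import Reals Lra List.
From Coquelicot Require Import Coquelicot.
Open Scope R_scope.

(* With a constant control k <> 0 the state moves along a parabola on which s
   changes at the constant speed k b, so every value of s can be reached; with
   the control 0, s is frozen and t drifts at the constant speed gamma s.  From
   (s0, t0) we steer s to some p with gamma p > 0, drift, steer s to some q with
   gamma q < 0, drift, and finally steer s to s1.  The changes of t along the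
   three steering arcs do not depend on the drift durations, and the drifts
   contribute gamma p Tp + gamma q Tq, which takes every real value for
   suitable Tp, Tq > 0; so t can be made to end at t1. *)

Lemma exists_same_sign_avoiding (g x : R) :
  g <> 0 -> exists p, 0 < g * p /\ p <> x.
Proof.
intros Hg. assert (Hx := Rle_abs x). assert (Hx' := Rabs_maj2 x).
destruct (Rlt_or_le 0 g) as [H|H].
- exists (Rabs x + 1). split; [nra|lra].
- exists (- (Rabs x + 1)). assert (g < 0) by lra. split; [nra|lra].
Qed.

Lemma exists_steering (b lo hi x x' : R) :
  b <> 0 -> lo < 0 < hi -> x <> x' ->
  exists k d, lo <= k <= hi /\ k <> 0 /\ 0 < d /\ x + k * b * d = x'.
Proof.
intros Hb Hl Hx. set (m := Rmin hi (- lo)).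
assert (Hm : 0 < m) by (apply Rmin_pos; lra).
assert (Hm_hi := Rmin_l hi (- lo)). assert (Hm_lo := Rmin_r hi (- lo)). fold m in Hm_hi, Hm_lo.
set (r := (x' - x) / b).
assert (Hx' : x' = x + r * b) by (unfold r; field; exact Hb).
assert (Hr : r <> 0) by (intro H; apply Hx; rewrite Hx', H; ring).
destruct (Rlt_or_le 0 r) as [H|H].
- exists m, (r / m). split; [lra|split; [lra|split]].
  + apply Rdiv_lt_0_compat; lra.
  + rewrite Hx'. field. lra.
- exists (- m), (- r / m). split; [lra|split; [lra|split]].
  + apply Rdiv_lt_0_compat; lra.
  + rewrite Hx'. field. lra.
Qed.

Lemma exists_pos_combination (al be X : R) :
  0 < al -> be < 0 -> exists T1 T2, 0 < T1 /\ 0 < T2 /\ al * T1 + be * T2 = X.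
Proof.
intros Hal Hbe. assert (HX := Rle_abs X). assert (HX0 := Rabs_pos X).
exists ((Rabs X + 1) / al), ((Rabs X + 1 - X) / - be).
split; [|split].
- apply Rdiv_lt_0_compat; lra.
- apply Rdiv_lt_0_compat; lra.
- field. lra.
Qed.

Lemma loc_const_locally (w : R -> R) (u : R) :
  loc_const w u <-> locally u (fun y => w y = w u).
Proof.
split.
- intros [d [Hd H]]. exists (mkposreal d Hd). intros y Hy. apply H. exact Hy.
- intros [[d Hd] H]. exists d. split; [exact Hd|]. intros y Hy. apply H. exact Hy.
Qed.

Lemma loc_const_ext_loc (f g : R -> R) (u : R) :
  locally u (fun y => f y = g y) -> (loc_const f u <-> loc_const g u).
Proof.
intros Hfg. rewrite !loc_const_locally.
assert (Hu := locally_singleton _ _ Hfg).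
split; intros H; apply filter_imp with (2 := filter_and _ _ Hfg H);
  intros y [H1 H2]; congruence.
Qed.

Definition glue (T : R) (f g : R -> R) (y : R) : R :=
  if Rle_dec y T then f y else g y.

Lemma glue_le (T : R) (f g : R -> R) (y : R) : y <= T -> glue T f g y = f y.
Proof. intros H. unfold glue. destruct (Rle_dec y T); [reflexivity|lra]. Qed.

Lemma glue_gt (T : R) (f g : R -> R) (y : R) : T < y -> glue T f g y = g y.
Proof. intros H. unfold glue. destruct (Rle_dec y T); [lra|reflexivity]. Qed.

Lemma glue_locally_left (T : R) (f g : R -> R) (u : R) :
  u < T -> locally u (fun y => f y = glue T f g y).
Proof.
intros H. apply filter_imp with (2 := open_lt T u H).
intros y Hy. symmetry. apply glue_le. lra.
Qed.

Lemma glue_locally_right (T : R) (f g : R -> R) (u : R) :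
  T < u -> locally u (fun y => g y = glue T f g y).
Proof.
intros H. apply filter_imp with (2 := open_gt T u H).
intros y Hy. symmetry. apply glue_gt. exact Hy.
Qed.

Lemma continuous_glue (T : R) (f g : R -> R) (u : R) :
  continuous f u -> continuous g u -> f T = g T -> continuous (glue T f g) u.
Proof.
intros Hf Hg HT. destruct (Rtotal_order u T) as [H|[H|H]].
- exact (continuous_ext_loc _ _ _ (glue_locally_left T f g u H) Hf).
- subst u. apply filterlim_locally. intros eps.
  pose proof (proj1 (filterlim_locally _ _) Hf eps) as Af.
  pose proof (proj1 (filterlim_locally _ _) Hg eps) as Ag.
  apply filter_imp with (2 := filter_and _ _ Af Ag). intros y [Hfy Hgy].
  rewrite (glue_le T f g T (Rle_refl T)). unfold glue.
  destruct (Rle_dec y T); [exact Hfy|rewrite HT; exact Hgy].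
- exact (continuous_ext_loc _ _ _ (glue_locally_right T f g u H) Hg).
Qed.

Lemma piecewise_constant_glue (T : R) (w1 w2 : R -> R) :
  piecewise_constant w1 -> piecewise_constant w2 ->
  piecewise_constant (glue T w1 w2).
Proof.
intros H1 H2 al be. destruct (H1 al be) as [l1 Hl1]. destruct (H2 al be) as [l2 Hl2].
exists (T :: l1 ++ l2). intros u Hu Hin.
destruct (Rtotal_order u T) as [H|[H|H]].
- apply (loc_const_ext_loc _ _ _ (glue_locally_left T w1 w2 u H)).
  apply Hl1; [exact Hu|]. intros Hl. apply Hin. right. apply in_or_app. left. exact Hl.
- exfalso. apply Hin. left. symmetry. exact H.
- apply (loc_const_ext_loc _ _ _ (glue_locally_right T w1 w2 u H)).
  apply Hl2; [exact Hu|]. intros Hl. apply Hin. right. apply in_or_app. right. exact Hl.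
Qed.

Lemma glue_const_not_loc_const (T : R) (w : R -> R) (k : R) :
  w T <> k -> ~ loc_const (glue T w (fun _ => k)) T.
Proof.
intros Hk [d [Hd H]]. apply Hk. specialize (H (T + d / 2)).
rewrite glue_gt, glue_le in H by lra. symmetry. apply H.
replace (T + d / 2 - T) with (d / 2) by ring. rewrite Rabs_pos_eq; lra.
Qed.

Section Trajectories.

Variables a b c gamma lo hi : R.

Definition trajectory (w s t : R -> R) : Prop :=
  admissible lo hi w /\
  (forall u, continuous s u /\ continuous t u) /\
  (forall u, loc_const w u ->
     is_derive s u (w u * b) /\
     is_derive t u ((gamma + a * w u) * s u + c * w u)).

(* The glued state need not be differentiable at T; the last hypothesis
   exempts T from the derivative condition. *)
Lemma trajectory_glue (T : R) (w1 s1 t1 w2 s2 t2 : R -> R) :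
  trajectory w1 s1 t1 -> trajectory w2 s2 t2 -> s1 T = s2 T -> t1 T = t2 T ->
  ~ loc_const (glue T w1 w2) T ->
  trajectory (glue T w1 w2) (glue T s1 s2) (glue T t1 t2).
Proof.
intros [[Hpc1 Hr1] [Hc1 Hd1]] [[Hpc2 Hr2] [Hc2 Hd2]] Hs Ht Hsw.
split; [split|split].
- apply piecewise_constant_glue; assumption.
- intros u. unfold glue. destruct (Rle_dec u T); auto.
- intros u. destruct (Hc1 u), (Hc2 u). split; apply continuous_glue; assumption.
- intros u Hu. destruct (Rtotal_order u T) as [H|[H|H]].
  + apply (loc_const_ext_loc _ _ _ (glue_locally_left T w1 w2 u H)) in Hu.
    destruct (Hd1 u Hu) as [Ds Dt]. rewrite !glue_le by lra. split.
    * exact (is_derive_ext_loc _ _ _ _ (glue_locally_left T s1 s2 u H) Ds).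
    * exact (is_derive_ext_loc _ _ _ _ (glue_locally_left T t1 t2 u H) Dt).
  + subst u. contradiction.
  + apply (loc_const_ext_loc _ _ _ (glue_locally_right T w1 w2 u H)) in Hu.
    destruct (Hd2 u Hu) as [Ds Dt]. rewrite !glue_gt by lra. split.
    * exact (is_derive_ext_loc _ _ _ _ (glue_locally_right T s1 s2 u H) Ds).
    * exact (is_derive_ext_loc _ _ _ _ (glue_locally_right T t1 t2 u H) Dt).
Qed.

Definition t_increment (k x e : R) : R :=
  (gamma + a * k) * (x * e + k * b * e ^ 2 / 2) + c * k * e.

Definition arc (k : R) (z : R * R) (e : R) : R * R :=
  (fst z + k * b * e, snd z + t_increment k (fst z) e).

Lemma arc_0 (k : R) (z : R * R) : arc k z 0 = z.
Proof. destruct z as [x y]. unfold arc, t_increment. simpl. f_equal; field. Qed.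

Lemma is_derive_arc (k : R) (z : R * R) (T u : R) :
  is_derive (fun u => fst (arc k z (u - T))) u (k * b) /\
  is_derive (fun u => snd (arc k z (u - T))) u
    ((gamma + a * k) * fst (arc k z (u - T)) + c * k).
Proof. unfold arc, t_increment. simpl. split; auto_derive; trivial; field. Qed.

Lemma trajectory_arc (k : R) (z : R * R) (T : R) :
  lo <= k <= hi ->
  trajectory (fun _ => k) (fun u => fst (arc k z (u - T))) (fun u => snd (arc k z (u - T))).
Proof.
intros Hk. split; [split|split].
- intros al be. exists nil. intros u _ _. exists 1. split; [lra|reflexivity].
- intros _. exact Hk.
- intros u. destruct (is_derive_arc k z T u) as [Ds Dt].
  split; [exact (ex_derive_continuous _ _ (ex_intro _ _ Ds))
         |exact (ex_derive_continuous _ _ (ex_intro _ _ Dt))].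
- intros u _. apply is_derive_arc.
Qed.

(* [k] is the value of the control at the arrival time: the next arc must use a
   different value, see [trajectory_glue]. *)
Definition reachable_with (v z : R * R) (k : R) : Prop :=
  exists tau w s t, 0 <= tau /\ trajectory w s t /\
    (s 0, t 0) = v /\ (s tau, t tau) = z /\ w tau = k.

Lemma reachable_with_refl (v : R * R) (k : R) :
  lo <= k <= hi -> reachable_with v v k.
Proof.
intros Hk. exists 0, (fun _ => k), (fun u => fst (arc k v (u - 0))),
  (fun u => snd (arc k v (u - 0))).
cbv beta. rewrite Rminus_diag, arc_0, <- surjective_pairing.
split; [lra|split; [apply trajectory_arc; exact Hk|auto]].
Qed.

Lemma reachable_with_arc (v z : R * R) (k k' d : R) :
  reachable_with v z k -> lo <= k' <= hi -> k' <> k -> 0 < d ->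
  reachable_with v (arc k' z d) k'.
Proof.
intros [tau [w [s [t [Htau [Htr [Hv [Hz Hk]]]]]]]] Hk' Hkk Hd.
exists (tau + d), (glue tau w (fun _ => k')),
  (glue tau s (fun u => fst (arc k' z (u - tau)))),
  (glue tau t (fun u => snd (arc k' z (u - tau)))).
split; [lra|split; [|split; [|split]]].
- apply trajectory_glue; [exact Htr|apply trajectory_arc; exact Hk'| | |].
  + rewrite Rminus_diag, arc_0, <- Hz. reflexivity.
  + rewrite Rminus_diag, arc_0, <- Hz. reflexivity.
  + apply glue_const_not_loc_const. congruence.
- rewrite !glue_le by lra. exact Hv.
- rewrite !glue_gt by lra. replace (tau + d - tau) with d by ring.
  symmetry. apply surjective_pairing.
- apply glue_gt. lra.
Qed.

Lemma reachable_steer (v : R * R) (x y x' k d : R) :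
  reachable_with v (x, y) 0 -> lo <= k <= hi -> k <> 0 -> 0 < d ->
  x + k * b * d = x' -> reachable_with v (x', y + t_increment k x d) k.
Proof.
intros Hv Hk Hk0 Hd Hx'. rewrite <- Hx'.
exact (reachable_with_arc v (x, y) 0 k d Hv Hk Hk0 Hd).
Qed.

Lemma reachable_drift (v : R * R) (x y k e : R) :
  lo <= 0 <= hi -> reachable_with v (x, y) k -> k <> 0 -> 0 < e ->
  reachable_with v (x, y + gamma * x * e) 0.
Proof.
intros H0 Hv Hk He.
replace (x, y + gamma * x * e) with (arc 0 (x, y) e)
  by (unfold arc, t_increment; simpl; f_equal; field).
apply (reachable_with_arc v (x, y) k 0 e Hv H0); [auto|exact He].
Qed.

Lemma reachable_with_pos_orbit (v z : R * R) (k : R) :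
  reachable_with v z k -> pos_orbit a b c gamma lo hi v z.
Proof.
intros [tau [w [s [t [Htau [[Hadm [Hc Hd]] [Hv [Hz _]]]]]]]].
subst v z. exists tau, w, s, t.
split; [exact Htau|split; [exact Hadm|split; [|reflexivity]]].
split; [reflexivity|split; [reflexivity|split; [exact Hc|exact Hd]]].
Qed.

End Trajectories.

Theorem proposition6 (a b c gamma lo hi : R) :
  b * gamma <> 0 -> lo < 0 < hi ->
  forall v z : R * R, pos_orbit a b c gamma lo hi v z.
Proof.
intros Hbg Hl [s0 t0] [s1 t1].
assert (Hb : b <> 0) by (intros H; apply Hbg; rewrite H; ring).
assert (Hg : gamma <> 0) by (intros H; apply Hbg; rewrite H; ring).
destruct (exists_same_sign_avoiding gamma s0 Hg) as [p [Hp Hps0]].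
destruct (exists_same_sign_avoiding (- gamma) s1 ltac:(lra)) as [q [Hq Hqs1]].
assert (Hpq : p <> q) by (intros H; subst q; lra).
destruct (exists_steering b lo hi s0 p Hb Hl (not_eq_sym Hps0))
  as [k1 [d1 [Hk1 [Hk1n [Hd1 E1]]]]].
destruct (exists_steering b lo hi p q Hb Hl Hpq) as [k2 [d2 [Hk2 [Hk2n [Hd2 E2]]]]].
destruct (exists_steering b lo hi q s1 Hb Hl Hqs1)
  as [k3 [d3 [Hk3 [Hk3n [Hd3 E3]]]]].
set (D := fun k x d => t_increment a b c gamma k x d).
destruct (exists_pos_combination (gamma * p) (gamma * q)
  (t1 - t0 - D k1 s0 d1 - D k2 p d2 - D k3 q d3) Hp ltac:(lra)) as [Tp [Tq [HTp [HTq HT]]]].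
apply (reachable_with_pos_orbit a b c gamma lo hi _ _ k3).
replace t1 with (t0 + D k1 s0 d1 + gamma * p * Tp + D k2 p d2 + gamma * q * Tq + D k3 q d3)
  by lra.
eapply reachable_steer; [|exact Hk3|exact Hk3n|exact Hd3|exact E3].
eapply reachable_drift; [lra| |exact Hk2n|exact HTq].
eapply reachable_steer; [|exact Hk2|exact Hk2n|exact Hd2|exact E2].
eapply reachable_drift; [lra| |exact Hk1n|exact HTp].
eapply reachable_steer; [|exact Hk1|exact Hk1n|exact Hd1|exact E1].
apply reachable_with_refl. lra.
Qed.
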